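(* Let $T$ be a permutation tableau, and let $i\neq j$ be two labels of $T$, each of which labels a dot (i.e. each is either a column label or the label of a restricted row). Then $i$ lies to the left of $j$ in $\xi(T)$ if and only if either $P_i<P_j$, or $P_j$ is contained in $P_i$.
   Context: Permutation tableaux. Draw a Ferrers diagram in English convention: rows are left-justified, row lengths weakly decrease from top to bottom, and every column is nonempty. Rows of length zero are allowed. A permutation tableau $T$ is a filling of the cells of such a diagram with 0's and 1's satisfying two conditions: (i) every column contains at least one 1; (ii) no cell containing 0 has both a 1 above it in its column and a 1 to its left in its row. Its length $n$ is the number of rows plus the number of columns. Labels. The southeast boundary path of $n$ unit south/west steps, from the top-right corner to the bottom-left corner, has its steps labeled $1,\ldots,n$ in order. Each row gets the label of its south step, and each column the label of its west step. $(i,j)$ denotes the cell in row $i$ and column $j$. Zeros, ones and rows. A 1 is topmost if there is no 1 above it in its column. A 0 is restricted if there is a 1 above it in its column. A rightmost restricted 0 is a restricted 0 with no restricted 0 to its right in its row. A row is unrestricted if it contains no restricted 0; empty rows are unrestricted. Dots. Black dots are placed on the topmost 1's (one per column), each labeled by its column label. White dots are placed on the rightmost restricted 0's (one per restricted row), each labeled by its row label. Alternating paths. An alternating path is a sequence of dots, identified with the sequence of their labels, built as follows. - From a white dot in cell $(i,j)$, the next dot is the black dot of column $j$. - From a black dot in cell $(i,j)$: if row $i$ is unrestricted, the path ends; otherwise the next dot is the white dot of row $i$. For a label $k$ of a dot, $P_k$ is the alternating path starting at that dot. $P_k$ is contained in a path $P$ if $k$ is the label of a dot of $P$; then $P_k$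 is a final segment of $P$. Order on paths. Let $P_a,P_b$ be two such paths, neither contained in the other. Remove their longest common final segment (nothing is removed if they share no dot), obtaining nonempty paths $P'_a,P'_b$. Define $P_a>P_b$ if the last dot of $P'_a$ lies in a row strictly below the last dot of $P'_b$, or in the same row and strictly to its right. Otherwise $P_a<P_b$. The bijection $\xi$. Start with the labels of the unrestricted rows in increasing order. Then process the column labels in decreasing order. For a column $j$: 1. If its black dot is in cell $(i,j)$, insert $j$ immediately to the left of $i$. 2. If column $j$ has white dots in rows $i_1<\cdots<i_k$, insert $i_1\cdots i_k$, in increasing order, immediately to the left of $j$. The result is the permutation $\xi(T)$ of $[n]$. *)

From mathcomp Require Import all_boot.
Set Implicit Arguments.
Unset Strict Implicit.
Unset Printing Implicit Defensive.

(* A (candidate) permutation tableau of length [tn], encoded by its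
   southeast boundary path.  Labels are the naturals 1..tn; step k of the
   boundary path is a south step (a row, labelled k) iff [tisrow k], and a
   west step (a column, labelled k) otherwise.  [tfill i j] is the entry of
   cell (i,j) (true = 1, false = 0); it is only meaningful on cells.
   With the English convention, row i contains column j iff i < j
   (the south step of row i comes before the west step of column j).
   Row i' is above row i iff i' < i; column j' is to the left of column j
   iff j' > j. *)
Record ptab := PTab { tn : nat; tisrow : nat -> bool; tfill : nat -> nat -> bool }.

Section Tab.
Variable T : ptab.

Definition labels := iota 1 (tn T).
Definition is_label (k : nat) := (1 <= k <= tn T).
Definition is_row (i : nat) := is_label i && tisrow T i.
Definition is_col (j : nat) := is_label j && ~~ tisrow T j.
Definition is_cell (i j : nat) := [&& is_row i, is_col j & i < j].
Definition one (i j : nat) := is_cell i j && tfill T i j.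
Definition zero (i j : nat) := is_cell i j && ~~ tfill T i j.

(* Validity: Ferrers diagram with every column nonempty (equivalently, the
   first boundary step is a south step when n > 0), every column contains a
   1, and the "Le" condition (ii). *)
Definition valid_ptab : Prop :=
  [/\ 0 < tn T -> tisrow T 1,
      forall j, is_col j -> exists i, one i j &
      forall i j, zero i j ->
        ~ ((exists i', i' < i /\ one i' j) /\ (exists j', j < j' /\ one i j'))].

Definition rzero (i j : nat) := zero i j && has (fun i' => (i' < i) && one i' j) labels.
Definition restricted_row (i : nat) := is_row i && has (rzero i) labels.
Definition unrestricted_row (i : nat) := is_row i && ~~ has (rzero i) labels.

(* black dot of column j: the topmost 1 of column j, in row [black_row j] *)
Definition black_row (j : nat) := head 0 [seq i <- labels | one i j].
(* white dot of row i: the rightmost restricted 0 of row i, in column [white_col i] *)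
Definition white_col (i : nat) := head 0 [seq j <- labels | rzero i j].

Definition is_dot_label (k : nat) := is_col k || restricted_row k.

Definition dot_cell (k : nat) : nat * nat :=
  if is_col k then (black_row k, k) else (k, white_col k).

Definition next_dot (k : nat) : option nat :=
  if is_col k then
    (if restricted_row (black_row k) then Some (black_row k) else None)
  else Some (white_col k).

Fixpoint apath_aux (fuel k : nat) : seq nat :=
  k :: match fuel with
       | 0 => [::]
       | fuel'.+1 => match next_dot k with
                     | Some k' => apath_aux fuel' k'
                     | None => [::]
                     end
       end.

(* P_k, as the sequence of labels of its dots.  An alternating path visits
   pairwise distinct dots, hence has at most n dots, so fuel n suffices. *)
Definition apath (k : nat) : seq nat := apath_aux (tn T) k.

Definition contained (Pk P : seq nat) := head 0 Pk \in P.

Fixpoint strip_common (s t : seq nat) : seq nat * seq nat :=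
  match s, t with
  | x :: s', y :: t' => if x == y then strip_common s' t' else (s, t)
  | _, _ => (s, t)
  end.

Definition path_gt (Pa Pb : seq nat) : bool :=
  let st := strip_common (rev Pa) (rev Pb) in
  let ca := dot_cell (head 0 st.1) in
  let cb := dot_cell (head 0 st.2) in
  (cb.1 < ca.1) || ((ca.1 == cb.1) && (ca.2 < cb.2)).

Definition path_lt (Pa Pb : seq nat) : bool :=
  [&& ~~ contained Pa Pb, ~~ contained Pb Pa & ~~ path_gt Pa Pb].

Definition insert_before (xs : seq nat) (y : nat) (s : seq nat) : seq nat :=
  take (index y s) s ++ xs ++ drop (index y s) s.

Definition xi_step (s : seq nat) (j : nat) : seq nat :=
  let s1 := insert_before [:: j] (black_row j) s in
  insert_before [seq i <- labels | restricted_row i && (white_col i == j)] j s1.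

Definition xi : seq nat :=
  foldl xi_step [seq i <- labels | unrestricted_row i]
        (rev [seq j <- labels | is_col j]).

End Tab.

(* Send each dot to its parent: the next dot of its alternating path, or the
   unrestricted row where that path ends.  Dots and unrestricted rows then form
   a forest in which the reversed path P_k is the route from a root to k, so
   containment of paths is ancestry, and comparing P_i with P_j compares the
   two siblings at which the routes to i and j fork (through the last columns of
   the paths when the routes fork at the roots).  The construction of xi inserts
   every dot immediately to the left of its parent, parents before children and
   siblings in increasing order; by induction the word it builds lists its
   elements in post-order, descendants before ancestors and sibling subtrees in
   increasing order. *)

From Pilot Require Import Defs.
From mathcomp Require Import all_boot.
Set Implicit Arguments.
Unset Strict Implicit.
Unset Printing Implicit Defensive.

Lemma perm_insert_before xs y s : perm_eq (insert_before xs y s) (xs ++ s).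
Proof. by rewrite /insert_before perm_catCA cat_take_drop. Qed.

Lemma mem_insert_before xs y s : insert_before xs y s =i xs ++ s.
Proof. exact/perm_mem/perm_insert_before. Qed.

Lemma index_insert_before_new x y s :
  x \notin s -> index x (insert_before [:: x] y s) = index y s.
Proof.
move=> xs; rewrite /insert_before index_cat size_takel ?index_size //= eqxx addn0.
by rewrite ifN //; apply: contra xs; apply: mem_take.
Qed.

Lemma index_insert_before_old x y z s : x \notin s -> z \in s ->
  index z (insert_before [:: x] y s) =
    if index z s < index y s then index z s else (index z s).+1.
Proof.
move=> xs zs; set k := index y s; have Hk : k <= size s by rewrite index_size.
have E : index z s = index z (take k s ++ drop k s) by rewrite cat_take_drop.
have xz : (x == z) = false by apply: contraNF xs => /eqP ->.
rewrite -in_take_leq // {}E /insert_before !index_cat.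
by case: ifP => // _; rewrite size_takel // inE eq_sym xz addnCA add1n.
Qed.

Lemma insert_before_cons x y xs s : x != y ->
  insert_before xs y (insert_before [:: x] y s) = insert_before (x :: xs) y s.
Proof.
move=> xy; rewrite /insert_before; set k := index y s.
have Hk : k <= size s by rewrite index_size.
have -> : index y (take k s ++ [:: x] ++ drop k s) = k.+1.
  have idx0 : index y (drop k s) = 0.
    by rewrite /k; elim: s {k Hk} => //= z s IH; case: ifP => //= ->.
  by rewrite index_cat in_take_leq // ltnn size_takel //= (negPf xy) idx0 addn1.
rewrite take_cat drop_cat size_takel // ltnNge leqnSn /= subSn // subnn /=.
by rewrite take0 drop0 -catA.
Qed.

Lemma ltn_shift k a b :
  ((if a < k then a else a.+1) < (if b < k then b else b.+1)) = (a < b).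
Proof.
case: (ltnP a k) => Ha; case: (ltnP b k) => Hb //.
- by rewrite ltnS (leq_trans Ha Hb) (ltnW (leq_trans Ha Hb)).
- apply/idP/idP => [ab|]; first exact: ltn_trans ab.
  by move=> ab; move: (leq_trans Hb (ltnW (leq_ltn_trans Ha ab))); rewrite ltnn.
Qed.

Lemma head_filterP (p : pred nat) s : has p s -> p (head 0 [seq x <- s | p x]).
Proof. by elim: s => //= a s IH; case: ifP => //= _ /IH. Qed.

Lemma head_filter_min (p : pred nat) s x :
  sorted leq s -> x \in s -> p x -> head 0 [seq y <- s | p y] <= x.
Proof.
elim: s => //= a s IH Hs; rewrite inE => /orP [/eqP ->|xs] px; first by rewrite px.
case: ifP => _ /=; last exact: IH (path_sorted Hs) xs px.
by move/allP: (order_path_min leq_trans Hs); apply.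
Qed.

Definition postlex (lt : rel nat) (u v : seq nat) : bool :=
  match strip_common u v with
  | (a :: _, b :: _) => lt a b
  | (_ :: _, [::]) => true
  | _ => false
  end.

Lemma strip_common_cat w u v : strip_common (w ++ u) (w ++ v) = strip_common u v.
Proof. by elim: w => //= a w IH; rewrite eqxx. Qed.

Lemma strip_commonP u v : exists w u' v', [/\ u = w ++ u', v = w ++ v',
   strip_common u v = (u', v') &
   if (u', v') is (a :: _, b :: _) then a != b else True].
Proof.
elim: u v => [|a u IH] [|b v]; first by exists [::], [::], [::].
- by exists [::], [::], (b :: v).
- by exists [::], (a :: u), [::].
rewrite /=; case: eqP => [<-|/eqP ab]; last by exists [::], (a :: u), (b :: v).
by have [w [u' [v' [-> -> E H]]]] := IH v; exists (a :: w), u', v'.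
Qed.

Section PostLex.
Variable lt : rel nat.

Lemma postlex_cat w u v : postlex lt (w ++ u) (w ++ v) = postlex lt u v.
Proof. by rewrite /postlex strip_common_cat. Qed.

Lemma postlex_rcons w u j : ~~ prefix w u -> postlex lt u (rcons w j) = postlex lt u w.
Proof.
elim: w u => [|b w IH] [|c u] //.
rewrite prefix_cons rcons_cons /postlex /=; case: ifP => [/eqP <-|] //.
by rewrite eqxx /=; apply: IH.
Qed.

Hypothesis lt_total : forall a b, a != b -> lt a b = ~~ lt b a.

Lemma postlex_antisym u v : u != v -> postlex lt u v = ~~ postlex lt v u.
Proof.
elim: u v => [|a u IH] [|b v] //= uv; rewrite /postlex /= eq_sym.
case: eqP => [ba|/eqP ba]; last by rewrite lt_total // eq_sym.
by subst; apply: IH; apply: contra uv => /eqP ->.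
Qed.

End PostLex.

Section Forest.
Variables (par : nat -> nat) (anc : nat -> seq nat) (lt : rel nat).
Hypothesis anc0 : anc 0 = [::].
Hypothesis ancS : forall x, x != 0 -> anc x = x :: anc (par x).
Hypothesis lt_total : forall a b, a != b -> lt a b = ~~ lt b a.

Lemma anc_inj x y : anc x = anc y -> x = y.
Proof.
have [->|nx] := eqVneq x 0; have [->|ny] := eqVneq y 0 => //.
- by rewrite anc0 (ancS ny).
- by rewrite anc0 (ancS nx).
by rewrite (ancS nx) (ancS ny) => -[].
Qed.

Lemma rev_ancS x : x != 0 -> rev (anc x) = rcons (rev (anc (par x))) x.
Proof. by move=> nx; rewrite (ancS nx) rev_cons. Qed.

Lemma anc_rev_cat x w a t : rev (anc x) = w ++ a :: t -> anc a = a :: rev w.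
Proof.
elim/last_ind: t x => [|t y IH] x E;
  have nx : x != 0 by apply/eqP => x0; move/(congr1 size): E; rewrite x0 anc0 size_cat addnS.
  move: E; rewrite (rev_ancS nx) cats1 => /rcons_inj [E <-].
  by rewrite (ancS nx) -E revK.
by move: E; rewrite (rev_ancS nx) -rcons_cons -rcons_cat => /rcons_inj [/IH].
Qed.

Lemma anc_suffix x z : z \in anc x -> exists t, anc x = t ++ anc z.
Proof.
move: {2}(size (anc x)) (leqnn (size (anc x))) => m.
elim: m x => [|m IH] x; first by case: (anc x).
have [->|nx] := eqVneq x 0; first by rewrite anc0.
rewrite (ancS nx) /= ltnS inE => Hs /orP [/eqP ->|/(IH _ Hs) [t ->]].
  by exists [::]; rewrite (ancS nx).
by exists (x :: t).
Qed.

Lemma anc_antisym x y : x \in anc y -> y \in anc x -> x = y.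
Proof.
move=> /anc_suffix [t1 E1] /anc_suffix [t2 E2].
have : size (t1 ++ t2) = 0.
  by apply/eqP; rewrite -(eqn_add2r (size (anc y))) -size_cat -catA -E2 -E1.
by case: t1 E1 => // E1 _; apply: anc_inj; rewrite E1.
Qed.

Definition graft s x := insert_before [:: x] (par x) s.

(* Post-order of the forest: a node comes before its ancestors, and sibling
   subtrees come in [lt] order. *)
Definition before x y := postlex lt (rev (anc x)) (rev (anc y)).

Lemma before_antisym x y : x != y -> before x y = ~~ before y x.
Proof.
move=> xy; apply: postlex_antisym => //; apply: contra xy => /eqP E.
by apply/eqP/anc_inj; rewrite -[anc x]revK E revK.
Qed.

Definition par_closed (s : seq nat) := forall x, x \in s -> (par x == 0) || (par x \in s).

Definition forest_ordered s := [/\ uniq s, 0 \notin s, par_closed s &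
  forall x y, x \in s -> y \in s -> x != y -> (index x s < index y s) = before x y].

Definition graftable (s : seq nat) x := [/\ x \notin s, x != 0, (par x == 0) || (par x \in s) &
   forall a, a \in s -> par a = par x -> lt a x].

Lemma par_closed_anc s x z : par_closed s -> 0 \notin s -> x \in s -> z \in anc x -> z \in s.
Proof.
move=> cl s0.
move: {2}(size (anc x)) (leqnn (size (anc x))) => m.
elim: m x => [|m IH] x; first by case: (anc x).
have [->|nx] := eqVneq x 0; first by rewrite (negPf s0).
rewrite (ancS nx) /= ltnS inE => Hs xs /orP [/eqP ->//|Hz].
case/orP: (cl _ xs) => [/eqP p0|ps]; last exact: IH Hs ps Hz.
by move: Hz; rewrite p0 anc0.
Qed.

Lemma mem_graft s x z : (z \in graft s x) = (z == x) || (z \in s).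
Proof. by rewrite mem_insert_before. Qed.

Section Graft.
Variable s : seq nat.
Hypothesis ord_s : forest_ordered s.
Variable x : nat.
Hypothesis graft_x : graftable s x.

Lemma before_graftable y : y \in s ->
  before y x = (par x == 0) || ((y != par x) && before y (par x)).
Proof.
have [_ s0 cl _] := ord_s; have [xs nx px sib] := graft_x.
move=> ys; have ny : y != 0 by apply: contraNneq s0 => <-.
rewrite /before (rev_ancS nx); set w := rev (anc (par x)); set u := rev (anc y).
have [/prefixP [t Eu]|npre] := boolP (prefix w u); last first.
- have p0 : (par x == 0) = false.
    by apply: contraNF npre => /eqP p0; rewrite /w p0 anc0 prefix0s.
  have -> : y != par x by apply: contra npre => /eqP yp; rewrite /u yp prefix_refl.
  by rewrite p0 postlex_rcons.
case: t Eu => [|a t] Eu.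
- have yp : y = par x by apply: anc_inj; rewrite -[anc y]revK -/u Eu cats0 revK.
  have pn : (par x == 0) = false by rewrite -yp (negPf ny).
  by rewrite Eu cats0 -cats1 -{1}[w]cats0 postlex_cat /postlex pn yp eqxx.
have a_s : a \in s.
  by apply: (par_closed_anc cl s0 ys); rewrite -mem_rev -/u Eu mem_cat mem_head orbT.
have ax : a != x by apply: contraNneq xs => <-.
have pa : par a = par x.
  have na : a != 0 by apply: contraNneq s0 => <-.
  have := anc_rev_cat Eu; rewrite (ancS na) /w revK => -[].
  exact: anc_inj.
have -> : y != par x.
  apply/eqP => yp; move/eqP: (Eu); rewrite /u yp -/w -{1}[w]cats0.
  by rewrite eqseq_cat // andbF.
rewrite Eu -cats1 postlex_cat /postlex /= (negPf ax) (sib _ a_s pa).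
by rewrite -{2}[w]cats0 strip_common_cat orbT.
Qed.

Lemma index_graft_lt_new y : y \in s ->
  (index y (graft s x) < index x (graft s x)) = before y x.
Proof.
have [_ s0 _ ord] := ord_s; have [xs _ px _] := graft_x.
move=> ys; rewrite before_graftable // /graft index_insert_before_new //.
rewrite index_insert_before_old //.
have [p0|pn] /= := eqVneq (par x) 0.
  by rewrite p0 (memNindex s0) index_mem ys /= index_mem.
have ps : par x \in s by case/orP: px => //; rewrite (negPf pn).
have [->|ypn] /= := eqVneq y (par x); first by rewrite ltnn ltnNge leqnSn.
rewrite -(ord y (par x)) //; case: ifP => // H.
by apply/negbTE; rewrite -leqNgt leqW // leqNgt H.
Qed.

Lemma forest_ordered_graft : forest_ordered (graft s x).
Proof.
have [us s0 cl ord] := ord_s; have [xs nx px _] := graft_x.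
split.
- by rewrite (perm_uniq (perm_insert_before _ _ _)) /= xs.
- by rewrite mem_graft negb_or s0 eq_sym nx.
- move=> z; rewrite !mem_graft => /orP [/eqP ->|zs]; first by case/orP: px => ->; rewrite ?orbT.
  by case/orP: (cl _ zs) => ->; rewrite ?orbT.
move=> y z; rewrite !mem_graft => /orP [/eqP ->|ys] /orP [/eqP ->|zs] yz.
- by rewrite eqxx in yz.
- have zx : z != x by rewrite eq_sym.
  have neq : index x (graft s x) != index z (graft s x).
    apply: contra zx => /eqP E; have zg : z \in graft s x by rewrite mem_graft zs orbT.
    by rewrite -(nth_index 0 zg) -E nth_index // mem_graft eqxx.
  by rewrite before_antisym // -index_graft_lt_new // ltn_neqAle neq leqNgt.
- exact: index_graft_lt_new.
by rewrite /graft !index_insert_before_old // ltn_shift ord.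
Qed.

End Graft.

Lemma mem_foldl_graft L s y : (y \in foldl graft s L) = (y \in s ++ L).
Proof.
elim: L s => [|a L IH] s /=; first by rewrite cats0.
by rewrite IH mem_cat mem_graft !mem_cat inE orbCA orbA.
Qed.

Lemma eq_mem_graftable s s' x : s =i s' -> graftable s x -> graftable s' x.
Proof.
move=> E [xs nx px sib]; split => //; first by rewrite -E.
  by rewrite -E.
by move=> a; rewrite -E; apply: sib.
Qed.

Lemma forest_ordered_foldl L s : forest_ordered s ->
    (forall L1 x L2, L = L1 ++ x :: L2 -> graftable (s ++ L1) x) ->
  forest_ordered (foldl graft s L).
Proof.
elim: L s => [|a L IH] s ord_s graft_L //=.
have graft_a : graftable s a by have := graft_L [::] a L erefl; rewrite cats0.
apply: IH => [|L1 x L2 E]; first exact: forest_ordered_graft.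
apply: eq_mem_graftable (graft_L (a :: L1) x L2 _); last by rewrite E.
by move=> z; rewrite [RHS]mem_cat mem_graft !mem_cat inE orbCA orbA.
Qed.

Definition graft_ranked (prec : rel nat) (L : seq nat) x :=
  [/\ x != 0, (par x == 0) || ((par x \in L) && prec (par x) x) &
      forall a, a \in L -> par a = par x -> prec a x -> lt a x].

Section Ranked.
Variables (prec : rel nat) (L : seq nat).
Hypothesis prec_asym : forall a b, prec a b -> ~~ prec b a.
Hypothesis L_sorted : pairwise prec L.
Hypothesis L_ranked : {in L, forall x, graft_ranked prec L x}.

Lemma graftable_pairwise L1 x L2 : L = L1 ++ x :: L2 -> graftable L1 x.
Proof.
move=> E; have xL : x \in L by rewrite E mem_cat mem_head orbT.
have [nx hp hs] := L_ranked xL.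
have irr a : prec a a = false by apply/negbTE/negP => h; move: (prec_asym h); rewrite h.
move: L_sorted; rewrite E pairwise_cat pairwise_cons => /and4P [/allrelP A _ /allP B _].
have A' a : a \in L1 -> prec a x by move=> aL; apply: A => //; apply: mem_head.
split => //.
- by apply/negP => /A'; rewrite irr.
- case/orP: hp => [->//|/andP [pL bp]]; apply/orP; right.
  move: pL; rewrite E mem_cat inE => /orP [//|/orP [/eqP px|/B /prec_asym]].
    by rewrite px irr in bp.
  by rewrite bp.
- by move=> a aL1 pa; apply: hs (A' _ aL1) => //; rewrite E mem_cat aL1.
Qed.

Lemma forest_ordered_ranked : forest_ordered (foldl graft [::] L).
Proof.
apply: forest_ordered_foldl; first by split.
by move=> L1 x L2 /graftable_pairwise.
Qed.

End Ranked.

Lemma before_anc x y : x != y -> y \in anc x -> before x y.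
Proof.
move=> xy /anc_suffix [[|a t] E]; first by case/eqP: xy; apply: anc_inj.
rewrite /before E rev_cat -[X in postlex _ _ X]cats0 postlex_cat rev_cons.
by rewrite /postlex; case: (rev t).
Qed.

Lemma before_desc x y : x \in anc y -> ~~ before x y.
Proof.
move=> /anc_suffix [t E]; rewrite /before E rev_cat -[X in postlex _ X _]cats0.
by rewrite postlex_cat /postlex; case: (rev t).
Qed.

Lemma before_fork x y w a u b v : rev (anc x) = w ++ a :: u -> rev (anc y) = w ++ b :: v ->
  a != b -> before x y = lt a b.
Proof. by move=> Ex Ey ab; rewrite /before Ex Ey postlex_cat /postlex /= (negPf ab). Qed.

Lemma fork_par x w a u : rev (anc x) = w ++ a :: u -> anc (par a) = rev w.
Proof.
move/anc_rev_cat => Ea; have na : a != 0 by apply/eqP => a0; move: Ea; rewrite a0 anc0.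
by move: Ea; rewrite (ancS na) => -[].
Qed.

Lemma fork_not_anc x y w a u b v : rev (anc x) = w ++ a :: u -> rev (anc y) = w ++ b :: v ->
  a != b -> x \notin anc y.
Proof.
move=> Ex Ey ab; apply/negP => /anc_suffix [t Et].
move: Ey; rewrite Et rev_cat Ex -catA => /(congr1 (drop (size w))).
by rewrite !drop_size_cat // => -[Eab _]; rewrite Eab eqxx in ab.
Qed.

End Forest.

Section Tableau.
Variable T : ptab.
Hypothesis T_valid : valid_ptab T.

Local Notation n := (tn T).
Local Notation br := (black_row T).
Local Notation wc := (white_col T).

Lemma mem_labels k : (k \in labels T) = is_label T k.
Proof. by rewrite /labels mem_iota /is_label addnC addn1 ltnS. Qed.

Lemma label_neq0 k : is_label T k -> k != 0.
Proof. by case/andP; rewrite lt0n. Qed.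

Lemma row_label i : is_row T i -> is_label T i. Proof. by case/andP. Qed.
Lemma col_label j : is_col T j -> is_label T j. Proof. by case/andP. Qed.
Lemma rrow_row i : restricted_row T i -> is_row T i. Proof. by case/andP. Qed.
Lemma urow_row i : unrestricted_row T i -> is_row T i. Proof. by case/andP. Qed.

Lemma row_not_col k : is_row T k -> is_col T k = false.
Proof. by rewrite /is_row /is_col => /andP [_ ->]; rewrite andbF. Qed.

Lemma rrow_not_col k : restricted_row T k -> is_col T k = false.
Proof. by move/rrow_row/row_not_col. Qed.

Lemma urow_not_rrow k : unrestricted_row T k -> restricted_row T k = false.
Proof. by rewrite /unrestricted_row /restricted_row => /andP [-> /negbTE ->]. Qed.

Lemma row_cases k : is_row T k -> unrestricted_row T k || restricted_row T k.
Proof. by rewrite /unrestricted_row /restricted_row => ->; case: has. Qed.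

Lemma dot_label k : is_dot_label T k -> is_label T k.
Proof. by case/orP => [/col_label|/rrow_row/row_label]. Qed.

Lemma black_dotP c : is_col T c -> [/\ is_row T (br c), Defs.one T (br c) c & br c < c].
Proof.
move=> Hc; have [_ /(_ c Hc) [i Hi] _] := T_valid.
have H : Defs.one T (br c) c.
  apply: (@head_filterP (fun i => Defs.one T i c)); apply/hasP; exists i => //.
  by rewrite mem_labels; case/andP: Hi => /and3P [/row_label].
by case/andP: (H) => /and3P [].
Qed.

Lemma black_row_min c i : Defs.one T i c -> br c <= i.
Proof.
move=> H; apply: (@head_filter_min (fun i => Defs.one T i c)) => //; first exact: iota_sorted.
by rewrite mem_labels; case/andP: H => /and3P [/row_label].
Qed.

Lemma white_dotP i : restricted_row T i -> [/\ is_col T (wc i), rzero T i (wc i) & i < wc i].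
Proof.
case/andP => _ /(@head_filterP (rzero T i)) H.
by case/andP: (H) => /andP [/and3P []].
Qed.

(* Condition (ii): a restricted 0 has no 1 to its left, so the white dot of a
   row lies to the left of every 1 of that row. *)
Lemma black_row_white_col j : is_col T j -> restricted_row T (br j) -> j < wc (br j).
Proof.
move=> Hj Hr; have [_ H1 _] := black_dotP Hj; have [_ H2 _] := white_dotP Hr.
rewrite ltnNge leq_eqVlt; apply/negP => /orP [/eqP E|lt].
  by move: H1 H2; rewrite /Defs.one /rzero /Defs.zero E => /andP [_ ->] /andP [/andP [_ ]].
have [_ _ /(_ (br j) (wc (br j))) no_le] := T_valid.
move: H2; rewrite /rzero => /andP [Hz /hasP [i' _ /andP [lt' o']]].
by apply: (no_le Hz); split; [exists i' | exists j]; split => //; apply/ltP.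
Qed.

Lemma white_col_black_row i : restricted_row T i -> br (wc i) < i.
Proof.
move=> /white_dotP [_ /andP [_ /hasP [i' _ /andP [lt' o']]] _].
exact: leq_ltn_trans (black_row_min o') lt'.
Qed.

Definition par x := if is_col T x then br x else if restricted_row T x then wc x else 0.

Lemma col_par x : is_col T x -> par x = br x.
Proof. by rewrite /par => ->. Qed.

Lemma rrow_par x : restricted_row T x -> par x = wc x.
Proof. by move=> H; rewrite /par rrow_not_col // H. Qed.

Lemma urow_par x : unrestricted_row T x -> par x = 0.
Proof. by move=> H; rewrite /par (row_not_col (urow_row H)) urow_not_rrow. Qed.

Lemma col_par_neq0 x : is_col T x -> par x != 0.
Proof. by move=> H; rewrite col_par //; have [/row_label/label_neq0 + _ _] := black_dotP H. Qed.

Lemma rrow_par_neq0 x : restricted_row T x -> par x != 0.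
Proof. by move=> H; rewrite rrow_par //; have [/col_label/label_neq0 + _ _] := white_dotP H. Qed.

Lemma dot_par_neq0 k : is_dot_label T k -> par k != 0.
Proof. by case/orP => [/col_par_neq0|/rrow_par_neq0]. Qed.

Lemma par_cases x : par x != 0 ->
  (is_col T x /\ is_row T (par x)) \/ (restricted_row T x /\ is_col T (par x)).
Proof.
rewrite /par; case: ifP => [Hc _|_]; first by left; have [] := black_dotP Hc.
case: ifP => [Hr _|_]; last by rewrite eqxx.
by right; have [] := white_dotP Hr.
Qed.

(* From a dot to its parent either the row moves up (smaller label) or the
   column moves left (larger label), so this measure strictly decreases. *)
Definition height x :=
  if is_col T x then n + br x - x else if restricted_row T x then n + x - wc x else 0.

Lemma height_par x : par x != 0 -> height (par x) < height x.
Proof.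
case/par_cases => [[Hc Hr]|[Hr Hc]].
- have /andP [r1 _] := row_label Hr; have /andP [_ cn] := col_label Hc.
  rewrite /height Hc (row_not_col Hr) -col_par //.
  case: ifP => [Hrr|_]; last by rewrite subn_gt0 -addn1 leq_add.
  have [Hw _ _] := white_dotP Hrr; have /andP [_ wn] := col_label Hw.
  rewrite ltn_sub2lE; last by rewrite (leq_trans wn) // leq_addr.
  by move: Hrr; rewrite col_par //; apply: black_row_white_col.
- have /andP [_ wn] := col_label Hc; have /andP [x1 _] := row_label (rrow_row Hr).
  rewrite rrow_par // in Hc wn *; rewrite /height Hc rrow_not_col // Hr.
  apply: ltn_sub2r; first by rewrite -addn1 leq_add.
  by rewrite ltn_add2l white_col_black_row.
Qed.

Lemma height_le x : height x <= n.
Proof.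
rewrite /height; case: ifP => [/black_dotP [_ _ lt]|_].
  by rewrite leq_subLR addnC leq_add2r ltnW.
case: ifP => // /white_dotP [_ _ lt].
by rewrite leq_subLR addnC leq_add2r ltnW.
Qed.

Fixpoint ancf f x : seq nat :=
  if x == 0 then [::] else x :: (if f is f'.+1 then ancf f' (par x) else [::]).

Definition anc x := ancf n x.

Lemma ancf_par0 f x : x != 0 -> par x = 0 -> ancf f x = [:: x].
Proof. by move=> nx p0; case: f => [|f] /=; rewrite (negPf nx) ?p0 //; case: f. Qed.

Lemma ancf_stable f g x : height x <= f -> height x <= g -> ancf f x = ancf g x.
Proof.
elim: f g x => [|f IH] g x Hf Hg; have [->|nx] := eqVneq x 0; try by case: g Hg.
- have [p0|pn] := eqVneq (par x) 0; first by rewrite !ancf_par0.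
  by have := height_par pn; rewrite leqn0 in Hf; rewrite (eqP Hf).
have [p0|pn] := eqVneq (par x) 0; first by rewrite !ancf_par0.
have lt := height_par pn.
case: g Hg => [|g] Hg; first by rewrite leqn0 in Hg; rewrite (eqP Hg) in lt.
by rewrite /= (negPf nx); congr (_ :: _); apply: IH; rewrite -ltnS (leq_trans lt).
Qed.

Lemma anc0 : anc 0 = [::].
Proof. by rewrite /anc; case: n. Qed.

Lemma ancS x : x != 0 -> anc x = x :: anc (par x).
Proof.
move=> nx; have [p0|pn] := eqVneq (par x) 0.
  by rewrite /anc ancf_par0 // p0; case: n.
have lt := height_par pn; have le := height_le x.
rewrite /anc; case E: n => [|m]; first by rewrite E in le; move: (leq_trans lt le).
rewrite [ancf m.+1 x]/= (negPf nx); congr (_ :: _); apply: ancf_stable.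
  by rewrite -ltnS -E (leq_trans lt).
by rewrite -E height_le.
Qed.

Lemma anc_urow r : unrestricted_row T r -> anc r = [:: r].
Proof. by move=> H; rewrite ancS ?label_neq0 ?row_label ?urow_row // urow_par // anc0. Qed.

(* Sibling columns are ordered from left to right, sibling rows from top to bottom. *)
Definition dot_lt (a b : nat) := if is_col T a && is_col T b then b < a else a < b.

Lemma dot_lt_total a b : a != b -> dot_lt a b = ~~ dot_lt b a.
Proof.
move=> ab; rewrite /dot_lt andbC; case: (_ && _); case: ltngtP => // E;
  by rewrite E eqxx in ab.
Qed.

Definition cols := [seq j <- labels T | is_col T j].
Definition white_rows c := [seq i <- labels T | restricted_row T i && (wc i == c)].
Definition urows := [seq i <- labels T | unrestricted_row T i].
Definition block c := c :: white_rows c.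
Definition xi_order := urows ++ flatten [seq block c | c <- rev cols].

Lemma foldl_graft_roots L s : 0 \notin s -> all (fun x => (par x == 0) && (x != 0)) L ->
  foldl (graft par) s L = s ++ L.
Proof.
elim: L s => [|x L IH] s s0 /=; first by rewrite cats0.
case/andP => /andP [/eqP p0 nx] HL.
have -> : graft par s x = s ++ [:: x].
  by rewrite /graft /insert_before p0 memNindex // take_size drop_size cats0.
by rewrite IH -?catA // mem_cat inE negb_or s0 eq_sym.
Qed.

Lemma foldl_graft_siblings xs y s : all (fun x => (par x == y) && (x != y)) xs ->
  foldl (graft par) s xs = insert_before xs y s.
Proof.
elim: xs s => [|x xs IH] s /=; first by rewrite /insert_before cat_take_drop.
by case/andP => /andP [/eqP px xy] H; rewrite IH // /graft px insert_before_cons.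
Qed.

Lemma xi_foldl_graft : xi T = foldl (graft par) [::] xi_order.
Proof.
rewrite /xi_order foldl_cat (@foldl_graft_roots urows [::]) //; last first.
  apply/allP => x; rewrite mem_filter => /andP [H _].
  by rewrite urow_par // eqxx label_neq0 // row_label // urow_row.
change (foldl (xi_step T) urows (rev cols) =
        foldl (graft par) urows (flatten [seq block c | c <- rev cols])).
have : all (is_col T) (rev cols) by rewrite all_rev filter_all.
elim: (rev cols) (urows) => [|c cs IH] s //= /andP [Hc Hcs].
rewrite foldl_cat IH //; congr foldl.
rewrite /block /= /xi_step (foldl_graft_siblings (y := c)); first by rewrite /graft col_par.
apply/allP => x; rewrite mem_filter => /andP [/andP [Hr /eqP Hw] _].
rewrite rrow_par // Hw eqxx /=.
by apply: contraTneq Hc => <-; rewrite rrow_not_col.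
Qed.

Lemma mem_xi_order x :
  (x \in xi_order) = [|| unrestricted_row T x, is_col T x | restricted_row T x].
Proof.
rewrite /xi_order mem_cat mem_filter mem_labels.
apply/idP/idP.
- case/orP => [/andP [-> _]//|/flatten_mapP [c]].
  rewrite mem_rev mem_filter => /andP [Hc _]; rewrite /block inE => /orP [/eqP ->|].
    by rewrite Hc orbT.
  by rewrite mem_filter => /andP [/andP [-> _] _]; rewrite !orbT.
case/or3P => [H|H|H]; first by rewrite H row_label // urow_row.
  apply/orP; right; apply/flatten_mapP; exists x; last exact: mem_head.
  by rewrite mem_rev mem_filter H mem_labels col_label.
apply/orP; right; apply/flatten_mapP; exists (wc x).
  by have [Hw _ _] := white_dotP H; rewrite mem_rev mem_filter Hw mem_labels col_label.
by rewrite /block inE mem_filter H eqxx mem_labels row_label ?rrow_row ?orbT.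
Qed.

Definition block_key x := if is_col T x then x else if restricted_row T x then wc x else n.+1.
Definition inblock_key x := if is_col T x then 0 else x.
Definition xi_rank_lt a b := (block_key b < block_key a) ||
  ((block_key a == block_key b) && (inblock_key a < inblock_key b)).

Lemma xi_rank_lt_asym a b : xi_rank_lt a b -> ~~ xi_rank_lt b a.
Proof.
rewrite /xi_rank_lt eq_sym; case: ltngtP => //= _ lt.
by apply/negP => /(ltn_trans lt); rewrite ltnn.
Qed.

Lemma block_key_block c y : is_col T c -> y \in block c -> block_key y = c.
Proof.
rewrite /block inE => Hc /orP [/eqP ->|]; first by rewrite /block_key Hc.
by rewrite mem_filter => /andP [/andP [Hr /eqP <-] _]; rewrite /block_key rrow_not_col // Hr.
Qed.

Lemma block_key_urow x : unrestricted_row T x -> block_key x = n.+1.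
Proof. by move=> H; rewrite /block_key (row_not_col (urow_row H)) urow_not_rrow. Qed.

Lemma inblock_key_row x : is_row T x -> inblock_key x = x.
Proof. by move=> H; rewrite /inblock_key row_not_col. Qed.

Lemma pairwise_ltn_labels (p : pred nat) : pairwise ltn [seq i <- labels T | p i].
Proof. by apply: pairwise_filter; rewrite -sorted_pairwise ?iota_ltn_sorted //; apply: ltn_trans. Qed.

Lemma pairwise_xi_rank_block c : is_col T c -> pairwise xi_rank_lt (block c).
Proof.
move=> Hc; rewrite /block pairwise_cons; apply/andP; split.
  apply/allP => x Hx; have Hb : x \in block c by rewrite inE Hx orbT.
  move: Hx; rewrite mem_filter => /andP [/andP [Hr _] _].
  rewrite /xi_rank_lt !(block_key_block Hc) ?mem_head // ltnn eqxx /inblock_key Hc.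
  by rewrite rrow_not_col // lt0n label_neq0 // row_label // rrow_row.
apply: (@sub_in_pairwise _ (mem (white_rows c)) ltn); last exact: pairwise_ltn_labels.
  move=> a b Ha Hb ab; have Ha' : a \in block c by rewrite inE Ha orbT.
  have Hb' : b \in block c by rewrite inE Hb orbT.
  move: Ha Hb; rewrite !mem_filter => /andP [/andP [Ha _] _] /andP [/andP [Hb _] _].
  by rewrite /xi_rank_lt !(block_key_block Hc) // ltnn eqxx !inblock_key_row ?rrow_row.
by apply/allP.
Qed.

Lemma pairwise_xi_rank_blocks cs : all (is_col T) cs -> pairwise (fun a b => b < a) cs ->
  pairwise xi_rank_lt (flatten [seq block c | c <- cs]).
Proof.
elim: cs => [|c cs IH] // /andP [Hc Hcs]; rewrite pairwise_cons => /andP [Hall Hpw].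
have -> : flatten [seq block c | c <- c :: cs] = block c ++ flatten [seq block c | c <- cs].
  by [].
rewrite pairwise_cat IH // pairwise_xi_rank_block // !andbT.
apply/allrelP => y z Hy /flatten_mapP [c' c'cs Hz].
have Hc' : is_col T c' by move/allP: Hcs => /(_ c' c'cs).
by rewrite /xi_rank_lt (block_key_block Hc Hy) (block_key_block Hc' Hz) (allP Hall).
Qed.

Lemma pairwise_xi_order : pairwise xi_rank_lt xi_order.
Proof.
have cols_col : all (is_col T) (rev cols) by rewrite all_rev filter_all.
rewrite /xi_order pairwise_cat; apply/and3P; split.
- apply/allrelP => a b; rewrite mem_filter => /andP [Ha _] /flatten_mapP [c Hc Hb].
  have Hcc : is_col T c by move/allP: cols_col => /(_ c Hc).
  rewrite /xi_rank_lt (block_key_urow Ha) (block_key_block Hcc Hb) ltnS.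
  by have /andP [_ ->] := col_label Hcc.
- apply: (@sub_in_pairwise _ (unrestricted_row T) ltn); last exact: pairwise_ltn_labels.
    move=> a b Ha Hb ab.
    by rewrite /xi_rank_lt !block_key_urow // ltnn eqxx !inblock_key_row ?urow_row.
  by apply/allP => x; rewrite mem_filter => /andP [].
apply: pairwise_xi_rank_blocks => //.
rewrite -sorted_pairwise; last by move=> a b c /[swap]; apply: ltn_trans.
by rewrite rev_sorted; apply: sorted_filter; [apply: ltn_trans | apply: iota_ltn_sorted].
Qed.

Lemma siblings_col a b : par a = par b -> par a != 0 -> is_col T a = is_col T b.
Proof.
move=> pab pa; have pb : par b != 0 by rewrite -pab.
case: (par_cases pa) => [[Ha Hpa]|[Ha Hpa]]; case: (par_cases pb) => [[Hb Hpb]|[Hb Hpb]].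
- by rewrite Ha Hb.
- by move: Hpb; rewrite -pab row_not_col.
- by move: Hpa; rewrite pab row_not_col.
- by rewrite !rrow_not_col.
Qed.

Lemma xi_ranked x : x \in xi_order -> graft_ranked par dot_lt xi_rank_lt xi_order x.
Proof.
rewrite mem_xi_order => /or3P [Hx|Hx|Hx].
- split; first by rewrite label_neq0 // row_label // urow_row.
    by rewrite urow_par.
  move=> a; rewrite (urow_par Hx) mem_xi_order => /or3P [Ha|Ha|Ha] pa; last first.
  + by move: (rrow_par_neq0 Ha); rewrite pa eqxx.
  + by move: (col_par_neq0 Ha); rewrite pa eqxx.
  rewrite /xi_rank_lt !block_key_urow // ltnn eqxx !inblock_key_row ?urow_row //.
  by rewrite /dot_lt row_not_col ?urow_row.
- have [Hr _ _] := black_dotP Hx; have px := col_par_neq0 Hx.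
  split; first exact: label_neq0 (col_label Hx).
    have bx : block_key x = x by rewrite /block_key Hx.
    rewrite col_par // mem_xi_order /xi_rank_lt bx.
    case/orP: (row_cases Hr) => Hp; rewrite Hp /=.
      by rewrite (block_key_urow Hp) ltnS; case/andP: (col_label Hx) => _ ->; rewrite orbT.
    by rewrite /block_key (row_not_col Hr) Hp black_row_white_col ?orbT.
  move=> a _ pa; rewrite /xi_rank_lt /dot_lt /block_key /inblock_key.
  by rewrite (siblings_col pa) ?pa // Hx ltnn andbF orbF.
- have [Hw _ _] := white_dotP Hx; have px := rrow_par_neq0 Hx.
  split; first exact: label_neq0 (row_label (rrow_row Hx)).
    rewrite rrow_par // mem_xi_order Hw orbT /xi_rank_lt /block_key Hw rrow_not_col // Hx.
    rewrite eqxx ltnn /inblock_key Hw rrow_not_col //= lt0n.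
    by rewrite label_neq0 ?orbT // row_label // rrow_row.
  move=> a _ pa; have Ha : is_col T a = false by rewrite (siblings_col pa) ?pa // rrow_not_col.
  have Hra : restricted_row T a.
    have pa0 : par a != 0 by rewrite pa.
    by case: (par_cases pa0) => [[]|[]]; rewrite ?Ha.
  rewrite /xi_rank_lt /dot_lt /block_key /inblock_key Ha rrow_not_col // Hx Hra.
  by rewrite -!rrow_par // pa ltnn eqxx.
Qed.

Lemma forest_ordered_xi : forest_ordered par anc dot_lt (xi T).
Proof.
rewrite xi_foldl_graft; apply: (forest_ordered_ranked anc0 ancS dot_lt_total xi_rank_lt_asym).
  exact: pairwise_xi_order.
exact: xi_ranked.
Qed.

Lemma dot_in_xi k : is_dot_label T k -> k \in xi T.
Proof.
rewrite xi_foldl_graft mem_foldl_graft /= mem_xi_order.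
by case/orP => ->; rewrite ?orbT.
Qed.

Lemma apath_aux_anc f k : is_dot_label T k -> height k <= f ->
  exists2 r, unrestricted_row T r & anc k = rcons (apath_aux T f k) r.
Proof.
elim: f k => [|f IH] k Dk Hf.
  by move: (height_par (dot_par_neq0 Dk)); rewrite leqn0 in Hf; rewrite (eqP Hf).
have Hf' : height (par k) <= f by rewrite -ltnS (leq_trans (height_par (dot_par_neq0 Dk))).
have dot_par : is_dot_label T (par k) -> exists2 r, unrestricted_row T r &
    anc k = rcons (k :: apath_aux T f (par k)) r.
  by move=> Dp; have [r Hr E] := IH _ Dp Hf'; exists r; rewrite // (ancS (label_neq0 (dot_label Dk))) E.
rewrite /= /next_dot; case: ifP => Hc.
  rewrite -(col_par Hc); case: ifP => Hr; first by apply: dot_par; rewrite /is_dot_label Hr orbT.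
  have [Hrow _ _] := black_dotP Hc.
  have Hu : unrestricted_row T (par k) by move: (row_cases Hrow); rewrite -(col_par Hc) Hr orbF.
  exists (par k) => //.
  by rewrite (ancS (label_neq0 (dot_label Dk))) anc_urow.
have Hr : restricted_row T k by case/orP: Dk; rewrite ?Hc.
by rewrite -(rrow_par Hr); apply: dot_par; have [Hw _ _] := white_dotP Hr; rewrite /is_dot_label rrow_par // Hw.
Qed.

Lemma apath_anc k : is_dot_label T k ->
  exists2 r, unrestricted_row T r & anc k = rcons (apath T k) r.
Proof. by move=> Dk; apply: apath_aux_anc; rewrite ?height_le. Qed.

Lemma contained_apath k l : is_dot_label T k -> is_dot_label T l ->
  contained (apath T k) (apath T l) = (k \in anc l).
Proof.
move=> Dk Dl; have [r Hr ->] := apath_anc Dl.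
rewrite /contained mem_rcons inE.
have -> : head 0 (apath T k) = k by rewrite /apath; case: (tn T).
suff /negPf -> : k != r by [].
apply/eqP => kr; move: Dk; rewrite kr /is_dot_label urow_not_rrow //.
by rewrite row_not_col // urow_row.
Qed.

Lemma apath_last_col k r : is_dot_label T k -> unrestricted_row T r ->
  anc k = rcons (apath T k) r ->
  exists c q, [/\ rev (apath T k) = c :: q, is_col T c & br c = r].
Proof.
move=> Dk Hr Ek; case Eq: (rev (apath T k)) => [|c q].
  by move: (congr1 size Eq); rewrite size_rev /apath; case: (tn T).
have E1 : rev (anc k) = [::] ++ r :: c :: q by rewrite Ek rev_rcons Eq.
have Epc : par c = r.
  apply: (anc_inj anc0 ancS); rewrite (anc_urow Hr).
  by apply: (fork_par anc0 ancS (x := k) (w := [:: r]) (u := q)); rewrite E1.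
have /par_cases [[Hc _]|[_ Hw]] : par c != 0 by rewrite Epc label_neq0 // row_label // urow_row.
  by exists c, q; split => //; rewrite -col_par.
by move: Hw; rewrite Epc row_not_col // urow_row.
Qed.

Definition cell_gt a b := let ca := dot_cell T a in let cb := dot_cell T b in
  (cb.1 < ca.1) || ((ca.1 == cb.1) && (ca.2 < cb.2)).

Lemma path_gt_fork Pa Pb w a u b v : rev Pa = w ++ a :: u -> rev Pb = w ++ b :: v ->
  a != b -> path_gt T Pa Pb = cell_gt a b.
Proof. by move=> Ea Eb ab; rewrite /path_gt Ea Eb strip_common_cat /= (negPf ab). Qed.

Lemma dot_lt_siblings a b : a != b -> par a = par b -> par a != 0 ->
  dot_lt a b = ~~ cell_gt a b.
Proof.
move=> ab pab pa; have Eab := siblings_col pab pa.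
rewrite /dot_lt /cell_gt /dot_cell -Eab andbb /=.
case: ifP => Ha.
  have Hb : is_col T b by rewrite -Eab.
  by rewrite -!col_par // pab ltnn eqxx /= ltnNge leq_eqVlt (negPf ab).
by rewrite (negPf ab) /= orbF ltn_neqAle ab leqNgt.
Qed.

Lemma path_gt_roots i j ri rj : is_dot_label T i -> is_dot_label T j ->
  unrestricted_row T ri -> unrestricted_row T rj ->
  anc i = rcons (apath T i) ri -> anc j = rcons (apath T j) rj -> ri != rj ->
  path_gt T (apath T i) (apath T j) = ~~ dot_lt ri rj.
Proof.
move=> Di Dj Hri Hrj Ei Ej rij.
have [ci [qi [Eqi Hci Bci]]] := apath_last_col Di Hri Ei.
have [cj [qj [Eqj Hcj Bcj]]] := apath_last_col Dj Hrj Ej.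
have cij : ci != cj by apply: contraNneq rij => E; rewrite -Bci -Bcj E.
rewrite (path_gt_fork (w := [::]) Eqi Eqj cij) /cell_gt /dot_cell Hci Hcj /= Bci Bcj.
rewrite /dot_lt (row_not_col (urow_row Hri)) (negPf rij) /= orbF.
by rewrite ltn_neqAle eq_sym rij leqNgt.
Qed.

Lemma before_apath i j : is_dot_label T i -> is_dot_label T j -> i != j ->
  before anc dot_lt i j = path_lt T (apath T i) (apath T j) || contained (apath T j) (apath T i).
Proof.
move=> Di Dj ij; rewrite /path_lt !contained_apath //.
have [w [[|a u] [V' [EU EV _ Hd]]]] := strip_commonP (rev (anc i)) (rev (anc j)).
  have ij' : i \in anc j.
    by rewrite -mem_rev EV -(cats0 w) -EU mem_cat mem_rev ancS ?mem_head ?label_neq0 ?dot_label.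
  rewrite ij' (negPf (before_desc dot_lt anc0 ancS ij')) /=; apply/esym/negP => ji.
  by case/eqP: ij; apply: (anc_antisym anc0 ancS).
case: V' EV Hd => [|b v] EV Hd.
  have ji : j \in anc i.
    by rewrite -mem_rev EU -(cats0 w) -EV mem_cat mem_rev ancS ?mem_head ?label_neq0 ?dot_label.
  by rewrite ji (before_anc dot_lt anc0 ancS) ?orbT // eq_sym.
have nji : j \notin anc i by apply: (fork_not_anc anc0 ancS EV EU); rewrite eq_sym.
rewrite (fork_not_anc anc0 ancS EU EV) // (negPf nji) orbF.
rewrite (before_fork dot_lt EU EV Hd) /=.
have [ri Hri Ei] := apath_anc Di; have [rj Hrj Ej] := apath_anc Dj.
have EUi := EU; have EVj := EV; rewrite Ei Ej !rev_rcons in EUi EVj.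
case: w EU EV EUi EVj => [|r w] EU EV /= [Eri EUi] [Erj EVj].
  by rewrite -Eri -Erj (path_gt_roots Di Dj Hri Hrj Ei Ej) ?negbK // Eri Erj.
have pa := fork_par anc0 ancS EU; have Epar : par a = par b.
  by apply: (anc_inj anc0 ancS); rewrite pa (fork_par anc0 ancS EV).
have pn : par a != 0 by apply/eqP => p0; move: pa; rewrite p0 anc0 rev_cons; case: rev.
by rewrite (path_gt_fork EUi EVj Hd) dot_lt_siblings.
Qed.

End Tableau.

Theorem lemma2p5 (T : ptab) (i j : nat) :
  valid_ptab T -> is_dot_label T i -> is_dot_label T j -> i <> j ->
  (index i (xi T) < index j (xi T) <->
   path_lt T (apath T i) (apath T j) \/ contained (apath T j) (apath T i)).
Proof.
move=> V Di Dj /eqP ij.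
have [_ _ _ xi_before] := forest_ordered_xi V.
rewrite xi_before ?dot_in_xi // before_apath //.
by split => /orP.
Qed.
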